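(* Let $Z$ be an extremal assignment of order $n$. For each $G\in S_2(n)$ with $Z(G)\neq\emptyset$, let $B_G$ be the set of labels of the leaves adjacent to the (unique) assigned vertex of $G$. Then $\mathcal{C}=\{B_G: G\in S_2(n),\ Z(G)\ne\emptyset\}$ is a contraction indicator.
   Context: $[n]=\{1,\dots,n\}$. A stable $n$-labeled tree is a finite tree with $n$ leaves labeled bijectively by $[n]$, all internal vertices of degree $\ge 3$; $V(G)$ its internal vertices; $S(n)$ the set of such trees up to label-preserving isomorphism and $S_2(n)$ those with exactly 2 internal vertices. $G\rightsquigarrow G'$: $G'$ obtained by collapsing connected sets of internal vertices, inducing surjection $\pi:V(G)\to V(G')$. An extremal assignment of order $n$: rule $Z(G)\subset V(G)$ for $G\in S(n)$ with (a) $Z(G)\ne V(G)$, (b) if $G\rightsquigarrow G'$ and $\pi^{-1}(v')=\{v_1,\dots,v_k\}$ then $v'\in Z(G')\iff v_1,\dots,v_k\in Z(G)$. A contraction indicator is a collection $\mathcal{C}$ of subsets of $[n]$ such that (1) $2\le|B|\le n-2$ for every $B\in\mathcal{C}$; (2) if $B\in\mathcal{C}$ and $B'\subset B$ with $|B'|\ge 2$ then $B'\in\mathcal{C}$; (3) $B_1\cup B_2\ne[n]$ for all $B_1,B_2\in\mathcal{C}$. *)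

From mathcomp Require Import all_boot.
Set Implicit Arguments. Unset Strict Implicit. Unset Printing Implicit Defensive.

(* A concrete n-labeled graph with k internal vertices: vertex type
   'I_n + 'I_k (inl i = leaf labeled i.+1, inr v = internal vertex v),
   edge relation e. *)
Definition vtx (n k : nat) := ('I_n + 'I_k)%type.

(* G is a stable n-labeled tree: simple graph (symmetric, irreflexive),
   a tree (connected with |E| = |V| - 1; ordered pairs are counted twice),
   leaves of degree 1, internal vertices of degree >= 3. *)
Definition stable_tree (n k : nat) (e : rel (vtx n k)) : Prop :=
  [/\ symmetric e /\ irreflexive e,
      (forall x y : vtx n k, connect e x y),
      #|[set p : vtx n k * vtx n k | e p.1 p.2]| = (2 * (n + k) - 2)%N,
      (forall i : 'I_n, #|[set y | e (inl i) y]| = 1%N) &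
      (forall v : 'I_k, 3 <= #|[set y | e (inr v) y]|)].

Definition vmap (n k k' : nat) (pi : 'I_k -> 'I_k') (x : vtx n k) : vtx n k' :=
  match x with inl i => inl i | inr v => inr (pi v) end.

Definition contraction (n k k' : nat) (e : rel (vtx n k)) (e' : rel (vtx n k'))
    (pi : 'I_k -> 'I_k') : Prop :=
  [/\ (forall v' : 'I_k', exists v, pi v = v'),
      (forall v w : 'I_k, pi v = pi w ->
         connect [rel x y | [&& e x y,
                               (if x is inr a then pi a == pi v else false) &
                               (if y is inr b then pi b == pi v else false)]]
                 (inr v) (inr w)) &
      (forall a' b' : vtx n k',
         e' a' b' <-> (a' != b' /\
            exists a b, [/\ vmap (n:=n) pi a = a', vmap (n:=n) pi b = b' & e a b]))].

(* An assignment: for each concrete graph (k, e) a set of internal vertices.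
   Only its values on stable trees matter. *)
Definition assignment (n : nat) := forall k : nat, rel (vtx n k) -> {set 'I_k}.

Definition extremal_assignment (n : nat) (Z : assignment n) : Prop :=
  (forall k (e : rel (vtx n k)), stable_tree e -> Z k e != setT) /\
  (forall k k' (e : rel (vtx n k)) (e' : rel (vtx n k')) (pi : 'I_k -> 'I_k'),
     stable_tree e -> stable_tree e' -> contraction e e' pi ->
     forall v' : 'I_k',
       (v' \in Z k' e') = [forall v : 'I_k, (pi v == v') ==> (v \in Z k e)]).

Definition contraction_indicator (n : nat) (C : {set 'I_n} -> Prop) : Prop :=
  [/\ (forall B : {set 'I_n}, C B -> 2 <= #|B| <= n - 2),
      (forall B B' : {set 'I_n}, C B -> B' \subset B -> 2 <= #|B'| -> C B') &
      (forall B1 B2 : {set 'I_n}, C B1 -> C B2 -> B1 :|: B2 != setT)].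

Definition C_of (n : nat) (Z : assignment n) (B : {set 'I_n}) : Prop :=
  exists (e : rel (vtx n 2)) (v : 'I_2),
    [/\ stable_tree e, Z 2 e != set0, v \in Z 2 e &
        B = [set i : 'I_n | e (inl i) (inr v)]].

(** Every stable tree with two internal vertices is a caterpillar: the two
    internal vertices are adjacent and every leaf hangs from one of them, so
    such a tree is determined by the set of leaves at either vertex.  Both
    nontrivial axioms are obtained from a caterpillar [f] with three internal
    vertices 0 - 1 - 2, which contracts onto two-vertex trees by collapsing
    either edge, axiom (b) transporting assigned vertices along these
    contractions.
    - For [B' ⊊ B_G], put the leaves off the assigned vertex [v] at 0, those of
      [B \ B'] at 1 and those of [B'] at 2.  Collapsing 1 - 2 gives back [G],
      so 1 and 2 are assigned; collapsing 0 - 1 instead gives a two-vertex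
      tree in which the image of 2 carries exactly [B'] and is assigned, its
      only preimage being 2.
    - If [B_1 ∪ B_2 = [n]] and some label lies in both, the analogous [f]
      contracts onto both [G_1] and [G_2], which forces all three of its
      vertices to be assigned, contradicting (a).  If [B_1] and [B_2] are
      disjoint, [G_2] is [G_1] up to relabelling its two vertices, and both
      vertices of [G_1] are assigned. *)
From mathcomp Require Import all_boot zify.
From Stdlib Require Import FunctionalExtensionality.
Set Implicit Arguments. Unset Strict Implicit. Unset Printing Implicit Defensive.

(* [enum 'I_k] does not evaluate (it goes through the opaque [idP] of
   [insub]); this enumeration does, so finite checks over ordinals below are
   decided by computation. *)
Fixpoint ord_seq (k : nat) : seq 'I_k :=
  if k is k'.+1 then ord0 :: map (lift ord0) (ord_seq k') else [::].

Lemma mem_ord_seq k (x : 'I_k) : x \in ord_seq k.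
Proof.
elim: k x => [[]//|k IH] x /=; rewrite inE.
by case: (unliftP ord0 x) => [j ->|->]; rewrite ?eqxx // mem_map ?IH ?orbT //; exact: lift_inj.
Qed.

Lemma ord_allP k (P : pred 'I_k) : reflect (forall x, P x) (all P (ord_seq k)).
Proof. by apply: (iffP allP) => H x => [|_]; apply: H; rewrite ?mem_ord_seq. Qed.

Lemma ord_hasP k (P : pred 'I_k) : reflect (exists x, P x) (has P (ord_seq k)).
Proof. by apply: (iffP hasP) => [[x _ Px]|[x Px]]; exists x => //; exact: mem_ord_seq. Qed.

Definition path_rel (k : nat) : rel 'I_k := fun a b => (a.+1 == b) || (b.+1 == a).

(* [pi] maps the path on ['I_k] onto the path on ['I_k'], its fibres being
   single vertices or edges. *)
Definition path_collapse k k' (pi : 'I_k -> 'I_k') : bool :=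
  [&& all (fun v' => has (fun v => pi v == v') (ord_seq k)) (ord_seq k'),
      all (fun v => all (fun w => (pi v == pi w) ==> (v == w) || path_rel v w)
                        (ord_seq k)) (ord_seq k) &
      all (fun a' => all (fun b' => path_rel a' b' ==
             (a' != b') && has (fun a => has (fun b =>
                [&& pi a == a', pi b == b' & path_rel a b]) (ord_seq k)) (ord_seq k))
           (ord_seq k')) (ord_seq k')].

Definition caterpillar n k (f : 'I_n -> 'I_k) : rel (vtx n k) :=
  fun x y => match x, y with
  | inl i, inr w | inr w, inl i => f i == w
  | inr a, inr b => path_rel a b
  | inl _, inl _ => false
  end.

Lemma caterpillar_contraction n k k' (f : 'I_n -> 'I_k) (g : 'I_n -> 'I_k')
    (pi : 'I_k -> 'I_k') :
  path_collapse pi -> pi \o f =1 g -> contraction (caterpillar f) (caterpillar g) pi.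
Proof.
move=> + /functional_extensionality <-.
case/and3P=> /ord_allP surj /ord_allP fibres /ord_allP edges; split.
- by move=> v'; have /ord_hasP[v /eqP] := surj v'; exists v.
- move=> v w Evw; have /ord_allP/(_ w)/implyP/(_ (introT eqP Evw)) := fibres v.
  case/orP=> [/eqP <-|vw]; first exact: connect0.
  by apply: connect1; rewrite /= vw Evw !eqxx.
case=> [i|a'] [j|b'] /=.
- by split=> // [[_ [[a|a] [[b|b] [] //=]]]].
- split=> [/eqP <-|[_ [[a|a] [[b|b] []]]] //= [<-] [<-] /eqP -> //].
  by split=> //; exists (inl i), (inr (f i)); split=> /=.
- split=> [/eqP <-|[_ [[a|a] [[b|b] []]]] //= [<-] [<-] /eqP -> //].
  by split=> //; exists (inr (f j)), (inl j); split=> /=.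
- have /ord_allP/(_ b')/eqP -> := edges a'; split.
  + case/andP=> ne /ord_hasP[a /ord_hasP[b /and3P[/eqP pa /eqP pb ab]]].
    split; first by apply: contra ne => /eqP[->].
    by exists (inr a), (inr b); rewrite /= pa pb.
  + case=> ne [[x|a] [[y|b] [//= [pa] [pb] ab]]].
    rewrite (_ : a' != b'); last by apply: contra ne => /eqP ->.
    by apply/ord_hasP; exists a; apply/ord_hasP; exists b; rewrite pa pb !eqxx.
Qed.

Definition leaves_at n k (f : 'I_n -> 'I_k) (w : 'I_k) : {set 'I_n} := [set i | f i == w].

Lemma card_set_sum (T : finType) (P : pred T) : #|[set y | P y]| = \sum_y P y.
Proof. by rewrite -sum1dep_card big_mkcond; apply: eq_bigr => y _; case: (P y). Qed.

Lemma sum_ord_eq k (w : 'I_k) : \sum_(a < k) (w == a) = 1.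
Proof. by rewrite (bigD1 w) //= eqxx big1 // => a; rewrite eq_sym => /negbTE ->. Qed.

Section Caterpillar.
Variables (n k : nat) (f : 'I_n -> 'I_k.+1).

Lemma caterpillar_sym : symmetric (caterpillar f).
Proof. by move=> [i|a] [j|b] //=; rewrite /path_rel orbC. Qed.

Lemma caterpillar_irr : irreflexive (caterpillar f).
Proof. by move=> [i|a] //=; rewrite /path_rel orbb eqn_leq ltnn. Qed.

Lemma caterpillar_connect x y : connect (caterpillar f) x y.
Proof.
have to_ord0 m (lt_mk : m < k.+1) : connect (caterpillar f) (inr (Ordinal lt_mk)) (inr ord0).
  elim: m lt_mk => [|m IH] lt_mk; first by rewrite (_ : Ordinal _ = ord0) //; exact: val_inj.
  apply: connect_trans (IH (ltnW lt_mk)); apply: connect1.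
  by rewrite /= /path_rel /= eqxx orbT.
have {}to_ord0 z : connect (caterpillar f) z (inr ord0).
  case: z => [i|[m lt_mk]]; last exact: to_ord0.
  apply: connect_trans (connect1 (_ : caterpillar f _ (inr (f i)))) _ => /=; first exact: eqxx.
  by case: (f i) => m lt_mk; exact: to_ord0.
by apply: connect_trans (to_ord0 x) _; rewrite (sym_connect_sym caterpillar_sym).
Qed.

Lemma card_caterpillar_leaf i : #|[set y | caterpillar f (inl i) y]| = 1.
Proof. by rewrite card_set_sum big_sumType /= big1 // add0n sum_ord_eq. Qed.

Lemma card_caterpillar_inr w :
  #|[set y | caterpillar f (inr w) y]| = #|leaves_at f w| + \sum_b path_rel w b.
Proof. by rewrite !card_set_sum big_sumType. Qed.

Lemma caterpillar_stable :
  \sum_(a < k.+1) \sum_(b < k.+1) path_rel a b = 2 * k ->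
  (forall w, 3 <= #|leaves_at f w| + \sum_b path_rel w b) ->
  stable_tree (caterpillar f).
Proof.
move=> path_edges degs; split.
- by split; [exact: caterpillar_sym | exact: caterpillar_irr].
- exact: caterpillar_connect.
- rewrite card_set_sum.
  transitivity (\sum_x \sum_y (caterpillar f x y : nat)); first by rewrite pair_bigA.
  rewrite big_sumType /=.
  under eq_bigr => i _ do rewrite big_sumType /= big1 // add0n sum_ord_eq.
  under [X in _ + X = _]eq_bigr => a _ do rewrite big_sumType /=.
  rewrite big_split /= exchange_big /= path_edges.
  rewrite (eq_bigr (fun=> 1) (fun j _ => sum_ord_eq (f j))) !sum1_card card_ord; lia.
- exact: card_caterpillar_leaf.
- by move=> w; rewrite card_caterpillar_inr.
Qed.

End Caterpillar.

Notation mid3 := (@Ordinal 3 1 isT).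

Lemma ord2P (w : 'I_2) : w = ord0 \/ w = ord_max.
Proof. by case: w => [[|[|//]] ?]; [left|right]; exact: val_inj. Qed.

Lemma ord3P (w : 'I_3) : [\/ w = ord0, w = mid3 | w = ord_max].
Proof.
by case: w => [[|[|[|//]]] ?]; [constructor 1|constructor 2|constructor 3]; exact: val_inj.
Qed.

Lemma caterpillar2_stableP n (g : 'I_n -> 'I_2) :
  stable_tree (caterpillar g) <-> forall w, 2 <= #|leaves_at g w|.
Proof.
split=> [[_ _ _ _ deg] w | leaves].
  move: (deg w); rewrite card_caterpillar_inr !big_ord_recl big_ord0.
  by case: (ord2P w) => -> /=; lia.
apply: caterpillar_stable => [|w]; first by rewrite !big_ord_recl !big_ord0.
by have := leaves w; rewrite !big_ord_recl big_ord0; case: (ord2P w) => -> /=; lia.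
Qed.

Lemma caterpillar3_stable n (f : 'I_n -> 'I_3) :
  2 <= #|leaves_at f ord0| -> 0 < #|leaves_at f mid3| -> 2 <= #|leaves_at f ord_max| ->
  stable_tree (caterpillar f).
Proof.
move=> l0 l1 l2; apply: caterpillar_stable => [|w]; first by rewrite !big_ord_recl !big_ord0.
rewrite !big_ord_recl big_ord0.
by case: (ord3P w) => -> /=; rewrite !(add0n, addn0) ?addn1 ?addn2.
Qed.

Definition split3 n (A B : {set 'I_n}) (i : 'I_n) : 'I_3 :=
  if i \in A then ord0 else if i \in B then ord_max else mid3.

Lemma leaves_at_split3 n (A B : {set 'I_n}) :
  [/\ leaves_at (split3 A B) ord0 = A, leaves_at (split3 A B) mid3 = ~: (A :|: B)
    & leaves_at (split3 A B) ord_max = B :\: A].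
Proof.
by split; apply/setP=> i; rewrite !inE /split3; case: (i \in A); case: (i \in B).
Qed.

Lemma split3_stable n (A B : {set 'I_n}) :
  2 <= #|A| -> 2 <= #|B :\: A| -> 0 < #|~: (A :|: B)| ->
  stable_tree (caterpillar (split3 A B)).
Proof.
have [l0 l1 l2] := leaves_at_split3 A B.
by move=> *; apply: caterpillar3_stable; rewrite ?l0 ?l1 ?l2.
Qed.

Section StableTree.
Variables (n k : nat) (e : rel (vtx n k.+1)).
Hypothesis st : stable_tree e.

Lemma stable_leaf_adj_uniq i y z : e (inl i) y -> e (inl i) z -> y = z.
Proof.
case: st => _ _ _ /(_ i)/eqP/cards1P[y0 /setP N] _.
by move: (N y) (N z); rewrite !inE => -> -> /eqP -> /eqP ->.
Qed.

Lemma stable_leaf_leaf i j : e (inl i) (inl j) = false.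
Proof.
case: st => [[e_sym _] e_conn _ _ _]; apply/negP => e_ij.
pose S := [pred x : vtx n k.+1 | (x == inl i) || (x == inl j)].
have S_closed : closed e S.
  apply: (intro_closed (sym_connect_sym e_sym)) => x z e_xz.
  rewrite !inE => /orP[] /eqP x_eq; subst x.
  - by rewrite (stable_leaf_adj_uniq e_xz e_ij) eqxx orbT.
  - by rewrite (stable_leaf_adj_uniq e_xz (_ : e _ (inl i))) ?eqxx // e_sym.
by have := closed_connect S_closed (e_conn (inl i) (inr ord0)); rewrite !inE eqxx.
Qed.

Lemma stable_leaf_inr i : exists w, e (inl i) (inr w).
Proof.
case: st => _ _ _ /(_ i)/eqP/cards1P[[j|w] /setP N] _.
  by have := N (inl j); rewrite !inE eqxx stable_leaf_leaf.
by exists w; have := N (inr w); rewrite !inE eqxx.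
Qed.

End StableTree.

Definition attachment n (e : rel (vtx n 2)) (i : 'I_n) : 'I_2 :=
  if e (inl i) (inr ord0) then ord0 else ord_max.

Section StableTree2.
Variables (n : nat) (e : rel (vtx n 2)).
Hypothesis st : stable_tree e.

Lemma stable2_leaf_adjE i w : e (inl i) (inr w) = (attachment e i == w).
Proof.
have [w0 e_iw0] := stable_leaf_inr st i.
have adjE y : e (inl i) y = (y == inr w0).
  by apply/idP/eqP => [/(stable_leaf_adj_uniq st e_iw0)|->].
rewrite /attachment !adjE !(inj_eq inr_inj).
by case: (ord2P w0) => ->; case: (ord2P w) => ->.
Qed.

Lemma stable2_inr_adj : e (inr ord0) (inr ord_max).
Proof.
case: st => [[e_sym _] e_conn _ _ _]; apply/negPn/negP => not_adj.
pose S := [pred x : vtx n 2 | if x is inl i then attachment e i == ord0 else x == inr ord0].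
have S_closed : closed e S.
  apply: (intro_closed (sym_connect_sym e_sym)) => -[i|a] [j|b]; rewrite !inE /=.
  - by rewrite stable_leaf_leaf.
  - by rewrite stable2_leaf_adjE => /eqP <-.
  - by rewrite e_sym stable2_leaf_adjE => /eqP -> /eqP[->].
  - by move=> e_ab /eqP[a0]; subst a; case: (ord2P b) e_ab => -> //; rewrite (negbTE not_adj).
by have := closed_connect S_closed (e_conn (inr ord0) (inr ord_max)); rewrite !inE /=.
Qed.

Lemma stable2_caterpillar : e = caterpillar (attachment e).
Proof.
have [[e_sym e_irr] _ _ _ _] := st.
apply: functional_extensionality => -[i|a]; apply: functional_extensionality => -[j|b] /=.
- exact: stable_leaf_leaf.
- exact: stable2_leaf_adjE.
- by rewrite e_sym stable2_leaf_adjE.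
- case: (ord2P a) => ->; case: (ord2P b) => ->; rewrite ?e_irr //.
  + exact: stable2_inr_adj.
  + by rewrite e_sym stable2_inr_adj.
Qed.

End StableTree2.

Definition other (v : 'I_2) : 'I_2 := if v == ord0 then ord_max else ord0.
Definition collapse12 (v : 'I_2) (u : 'I_3) : 'I_2 := if u == ord0 then other v else v.
Definition collapse01 (v : 'I_2) (u : 'I_3) : 'I_2 := if u == ord_max then other v else v.
Definition relabel (v1 v2 u : 'I_2) : 'I_2 := if u == v1 then other v2 else v2.

Lemma path_collapse12 v : path_collapse (collapse12 v).
Proof. by case: v => [[|[|]] ?]. Qed.

Lemma path_collapse01 v : path_collapse (collapse01 v).
Proof. by case: v => [[|[|]] ?]. Qed.

Lemma path_collapse_relabel v1 v2 : path_collapse (relabel v1 v2).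
Proof. by case: v1 => [[|[|]] ?]; case: v2 => [[|[|]] ?]. Qed.

Lemma eq_other (x v : 'I_2) : (x == other v) = (x != v).
Proof. by case: (ord2P x) => ->; case: (ord2P v) => ->. Qed.

Lemma leaves_at_other n (g : 'I_n -> 'I_2) v : leaves_at g (other v) = ~: leaves_at g v.
Proof. by apply/setP=> i; rewrite !inE eq_other. Qed.

Lemma ord2_fun_leavesE n (g : 'I_n -> 'I_2) v i :
  g i = if i \in leaves_at g (other v) then other v else v.
Proof. by rewrite inE eq_other; case: eqP => // /eqP; rewrite -eq_other => /eqP. Qed.

Lemma collapse12_split3E n (g : 'I_n -> 'I_2) v (A B : {set 'I_n}) :
  leaves_at g (other v) = A -> collapse12 v \o split3 A B =1 g.
Proof.
move=> defA i; rewrite /= (ord2_fun_leavesE g v) defA /collapse12 /split3.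
by case: (i \in A); case: (i \in B).
Qed.

Lemma collapse01_split3E n (g : 'I_n -> 'I_2) v (A B : {set 'I_n}) :
  leaves_at g (other v) = B :\: A -> collapse01 v \o split3 A B =1 g.
Proof.
move=> defBA i; rewrite /= (ord2_fun_leavesE g v) defBA inE /collapse01 /split3.
by case: (i \in A); case: (i \in B).
Qed.

Section Extremal.
Variable n : nat.
Local Unset Implicit Arguments.
Variable Z : assignment n.
Local Set Implicit Arguments.
Hypothesis Zext : extremal_assignment Z.

Lemma extremal_contractionP k k' e e' (pi : 'I_k -> 'I_k') v' :
  stable_tree e -> stable_tree e' -> contraction e e' pi ->
  reflect (forall v, pi v = v' -> v \in Z k e) (v' \in Z k' e').
Proof.
move=> st st' c; rewrite (Zext.2 _ _ _ _ _ st st' c).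
apply: (iffP forallP) => [Zv v /eqP|Zv v]; first exact: implyP (Zv v).
by apply/implyP => /eqP; exact: Zv.
Qed.

Lemma extremal_not_full k e : stable_tree e -> ~ (forall v, v \in Z k e).
Proof. by move=> st Zall; have /eqP[] := Zext.1 k e st; apply/setP => v; rewrite inE Zall. Qed.

Lemma C_ofP B : C_of Z B <->
  exists g v, [/\ stable_tree (caterpillar g), v \in Z 2 (caterpillar g) & B = leaves_at g v].
Proof.
split=> [[e [v [st _ Zv ->]]] | [g [v [st Zv ->]]]].
  exists (attachment e), v; rewrite -stable2_caterpillar //; split=> //.
  by apply/setP => i; rewrite !inE stable2_leaf_adjE.
by exists (caterpillar g), v; split=> //; apply/set0Pn; exists v.
Qed.

Lemma C_of_card B : C_of Z B -> 2 <= #|B| <= n - 2.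
Proof.
case/C_ofP=> g [v [/caterpillar2_stableP leaves _ ->]].
have := cardsC (leaves_at g v); rewrite -leaves_at_other card_ord.
by have := leaves v; have := leaves (other v); lia.
Qed.

Lemma C_of_sub (B B' : {set 'I_n}) : C_of Z B -> B' \subset B -> 2 <= #|B'| -> C_of Z B'.
Proof.
move=> CB; case/C_ofP: (CB) => g [v [st Zv defB]] subB' cardB'.
have [eqBB'|neB'] := eqVneq B B'; first by rewrite -eqBB'.
have /properP[_ [j Bj B'j]] : B' \proper B by rewrite properEneq eq_sym neB'.
have leaves := (caterpillar2_stableP g).1 st.
set A := leaves_at g (other v).
have B'A : B' :\: A = B'.
  by apply/setDidPl; rewrite disjoints_subset /A leaves_at_other setCK -defB.
set f := split3 A B'.
have st3 : stable_tree (caterpillar f).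
  apply: split3_stable; [exact: leaves | by rewrite B'A | apply/card_gt0P; exists j].
  by move: Bj; rewrite defB !inE negb_or B'j andbT eq_other negbK.
have c12 : contraction (caterpillar f) (caterpillar g) (collapse12 v).
  exact: caterpillar_contraction (path_collapse12 v) (collapse12_split3E B' (erefl A)).
have Zf u : u != ord0 -> u \in Z 3 (caterpillar f).
  move=> u0; apply: (extremal_contractionP _ st3 st c12 Zv).
  by rewrite /collapse12 (negbTE u0).
set g' := collapse01 v \o f.
have leaves' : leaves_at g' (other v) = B'.
  apply/setP => i; rewrite -[in RHS]B'A inE /g' /= /collapse01 /f /split3 !inE.
  by case: (g i == other v); case: (i \in B'); rewrite ?eqxx // eq_other eqxx.
have st' : stable_tree (caterpillar g').
  apply/caterpillar2_stableP => w; have [->|] := eqVneq w (other v); first by rewrite leaves'.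
  rewrite eq_other negbK => /eqP ->; apply: leq_trans (leaves (other v)) (subset_leq_card _).
  by apply/subsetP => i iA; rewrite inE /g' /= /f /split3 iA.
have c01 : contraction (caterpillar f) (caterpillar g') (collapse01 v).
  exact: caterpillar_contraction (path_collapse01 v) (frefl _).
have Zv' : other v \in Z 2 (caterpillar g').
  apply/(extremal_contractionP _ st3 st' c01) => u.
  by rewrite /collapse01; case: eqP => [-> _|_ /eqP]; [exact: Zf | rewrite eq_other eqxx].
by apply/C_ofP; exists g', (other v); rewrite leaves'.
Qed.

Lemma C_of_union (B1 B2 : {set 'I_n}) : C_of Z B1 -> C_of Z B2 -> B1 :|: B2 != setT.
Proof.
case/C_ofP=> g1 [v1 [st1 Zv1 ->]]; case/C_ofP=> g2 [v2 [st2 Zv2 ->]].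
apply/negP => /eqP cover.
have covered i : (g1 i == v1) || (g2 i == v2) by have := in_setT i; rewrite -cover !inE.
set A1 := leaves_at g1 (other v1); set A2 := leaves_at g2 (other v2).
have A2A1 : A2 :\: A1 = A2.
  apply/setDidPl; rewrite disjoints_subset /A1 leaves_at_other setCK; apply/subsetP => i.
  by rewrite !inE eq_other; move: (covered i); case: (g2 i == v2); rewrite ?orbF.
have [disj|[j]] := set_0Vmem (leaves_at g1 v1 :&: leaves_at g2 v2); last first.
  rewrite !inE => /andP[g1j g2j].
  set f := split3 A1 A2.
  have st3 : stable_tree (caterpillar f).
    apply: split3_stable; rewrite ?A2A1.
    - exact: (caterpillar2_stableP g1).1 st1 (other v1).
    - exact: (caterpillar2_stableP g2).1 st2 (other v2).
    - by apply/card_gt0P; exists j; rewrite !inE !eq_other g1j g2j.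
  have c12 : contraction (caterpillar f) (caterpillar g1) (collapse12 v1).
    exact: caterpillar_contraction (path_collapse12 v1) (collapse12_split3E A2 (erefl A1)).
  have c01 : contraction (caterpillar f) (caterpillar g2) (collapse01 v2).
    exact: caterpillar_contraction (path_collapse01 v2) (collapse01_split3E (esym A2A1)).
  apply: (extremal_not_full st3) => u; have [->|u0] := eqVneq u ord0.
    exact: (extremal_contractionP _ st3 st2 c01 Zv2).
  by apply: (extremal_contractionP _ st3 st1 c12 Zv1); rewrite /collapse12 (negbTE u0).
have relabelE : relabel v1 v2 \o g1 =1 g2.
  move=> i; rewrite /= /relabel (ord2_fun_leavesE g2 v2 i) inE eq_other.
  have /setP/(_ i) := disj; rewrite !inE; move: (covered i).
  by case: (g1 i == v1); case: (g2 i == v2).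
have c := caterpillar_contraction (path_collapse_relabel v1 v2) relabelE.
have Zo1 : other v1 \in Z 2 (caterpillar g1).
  by apply: (extremal_contractionP _ st1 st2 c Zv2); rewrite /relabel eq_sym eq_other eqxx.
apply: (extremal_not_full st1) => u; have [->|] := eqVneq u v1; first exact: Zv1.
by rewrite -eq_other => /eqP ->.
Qed.

End Extremal.

Theorem lemma7p6 (n : nat) (Z : assignment n) :
  extremal_assignment Z -> contraction_indicator (C_of Z).
Proof.
move=> Zext; split.
- exact: C_of_card.
- exact: C_of_sub.
- exact: C_of_union.
Qed.
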